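(* Let $G=(V,E)$ be a graph with square $G^2=(V,E^2)$, and let $\sigma=(v_1,\ldots,v_n)$ be a maximum neighborhood ordering of $G$ such that for all $1\le i<n$, $m_i$ is a maximum neighbor of $v_i$ in $G_{\sigma,i}$ with $v_i\neq m_i$. If $1\le i<j\le n$ and $m_i\neq v_j$, then $v_iv_j\in E^2$ if and only if $m_iv_j\in E$.
   Context: All graphs are finite, simple and undirected; $N[v]$ denotes the closed neighborhood of $v$. The square $G^2=(V,E^2)$ has distinct $u,v$ adjacent iff $uv\in E$ or $u,v$ have a common neighbor in $G$. For a total ordering $\sigma=(v_1,\ldots,v_n)$ of $V$, $G_{\sigma,i}$ is the subgraph of $G$ induced by $\{v_i,\ldots,v_n\}$. In a graph $H$, a vertex $u\in N_H[v]$ is a maximum neighbor of $v$ if $N_H[x]\subseteq N_H[u]$ for all $x\in N_H[v]$. An ordering $\sigma$ is a maximum neighborhood ordering of $G$ if for every $i$, $v_i$ has a maximum neighbor in $G_{\sigma,i}$. *)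

From mathcomp Require Import all_boot.
Set Implicit Arguments. Unset Strict Implicit. Unset Printing Implicit Defensive.

Definition simple_graph (T : finType) (e : rel T) : Prop :=
  symmetric e /\ irreflexive e.

(* Closed neighbourhood N_H[v] in the subgraph H of (T,e) induced by S. *)
Definition cnbh (T : finType) (e : rel T) (S : {set T}) (v : T) : {set T} :=
  [set x in S | (x == v) || e v x].

Definition max_nb (T : finType) (e : rel T) (S : {set T}) (v u : T) : Prop :=
  u \in cnbh e S v /\ forall x, x \in cnbh e S v -> cnbh e S x \subset cnbh e S u.

Definition sq_adj (T : finType) (e : rel T) (u v : T) : bool :=
  (u != v) && (e u v || [exists w, e u w && e w v]).

(* Vertex set of G_{sigma,i} = G[{v_i,...,v_n}] (0-based indices). *)
Definition suffix_set (T : finType) (n : nat) (sigma : 'I_n -> T) (i : 'I_n)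
  : {set T} := [set sigma j | j : 'I_n & i <= j].

Definition is_ordering (T : finType) (n : nat) (sigma : 'I_n -> T) : Prop :=
  bijective sigma.

Definition is_MNO (T : finType) (e : rel T) (n : nat) (sigma : 'I_n -> T) : Prop :=
  is_ordering sigma /\
  forall i : 'I_n, exists u, max_nb e (suffix_set sigma i) (sigma i) u.

(* A vertex v_j that is adjacent in G^2 to an earlier vertex v_i is already at
   distance at most 2 from v_i inside G_{sigma,i}: if the middle vertex v_k comes
   before v_i, the maximum neighbour m_k of v_k is adjacent (or equal) to both
   v_i and v_j and comes strictly later than v_k, so we can repeat with m_k in
   place of v_k until the middle vertex lies in G_{sigma,i}.  There the maximum
   neighbour m_i absorbs the closed neighbourhood of that middle vertex, which
   contains v_j. *)

From mathcomp Require Import all_boot.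

Set Implicit Arguments.
Unset Strict Implicit.
Unset Printing Implicit Defensive.

Lemma mem_cnbh (T : finType) (e : rel T) (S : {set T}) (v x : T) :
  (x \in cnbh e S v) = (x \in S) && ((x == v) || e v x).
Proof. by rewrite inE. Qed.

Lemma max_nb_cnbh (T : finType) (e : rel T) (S : {set T}) (v u x y : T) :
  max_nb e S v u -> x \in cnbh e S v -> y \in cnbh e S x -> y \in cnbh e S u.
Proof. by move=> [_ max_u] /max_u /subsetP; apply. Qed.

Lemma max_nb_neq_adj (T : finType) (e : rel T) (S : {set T}) (v u : T) :
  max_nb e S v u -> v != u -> e v u.
Proof.
by case=> /[!mem_cnbh] /andP[_ /orP[/eqP-> | //]] _; rewrite eqxx.
Qed.

Lemma max_nb_adj (T : finType) (e : rel T) (S : {set T}) (v u x y : T) :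
  max_nb e S v u -> x \in cnbh e S v -> y \in cnbh e S x -> y != u -> e u y.
Proof.
move=> max_u xv yx; have := max_nb_cnbh max_u xv yx.
by rewrite mem_cnbh => /andP[_ /orP[/eqP-> | //]]; rewrite eqxx.
Qed.

Lemma mem_suffix_set (T : finType) (n : nat) (sigma : 'I_n -> T) (a b : 'I_n) :
  injective sigma -> (sigma b \in suffix_set sigma a) = (a <= b).
Proof.
move=> sigma_inj; apply/imsetP/idP => [[c] | le_ab]; last by exists b; rewrite ?inE.
by rewrite inE => le_ac /sigma_inj ->.
Qed.

Section SquareAdjacency.

Variables (T : finType) (e : rel T) (n : nat) (sigma : 'I_n -> T) (m : 'I_n -> T).
Hypothesis e_sym : symmetric e.
Hypothesis sigma_inj : injective sigma.
Hypothesis m_max : forall k : 'I_n, k.+1 < n ->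
  max_nb e (suffix_set sigma k) (sigma k) (m k) /\ sigma k != m k.

Local Notation S := (suffix_set sigma).
Local Notation mem_S := (mem_suffix_set _ _ sigma_inj).

Definition near_in_suffix (i j : 'I_n) : Prop :=
  exists2 w, w \in cnbh e (S i) (sigma i) & sigma j \in cnbh e (S i) w.

Lemma near_in_suffix_adj (i j : 'I_n) :
  i <= j -> e (sigma i) (sigma j) -> near_in_suffix i j.
Proof.
move=> le_ij eij; exists (sigma j); last by rewrite mem_cnbh mem_S le_ij eqxx.
by rewrite mem_cnbh mem_S le_ij eij orbT.
Qed.

Lemma max_nb_common_nb (k i j : 'I_n) :
  k < i -> i < j -> e (sigma k) (sigma i) -> e (sigma k) (sigma j) ->
  near_in_suffix i j \/
  exists2 k' : 'I_n, k < k' &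
    e (sigma k') (sigma i) && e (sigma k') (sigma j).
Proof.
move=> lt_ki lt_ij eki ekj.
have lt_kj := ltn_trans lt_ki lt_ij.
have [max_mk ne_kmk] := m_max (leq_ltn_trans lt_ki (ltn_ord i)).
have in_Nk (l : 'I_n) : k < l -> e (sigma k) (sigma l) ->
    sigma l \in cnbh e (S k) (sigma k).
  by move=> lt_kl ekl; rewrite mem_cnbh mem_S (ltnW lt_kl) ekl orbT.
have self_N (l : 'I_n) : k < l -> sigma l \in cnbh e (S k) (sigma l).
  by move=> lt_kl; rewrite mem_cnbh mem_S (ltnW lt_kl) eqxx.
have mk_i := max_nb_cnbh max_mk (in_Nk _ lt_ki eki) (self_N _ lt_ki).
have mk_j := max_nb_cnbh max_mk (in_Nk _ lt_kj ekj) (self_N _ lt_kj).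
move: mk_i mk_j; rewrite !mem_cnbh => /andP[_ /orP[/eqP i_eq_mk | emk_i]].
  rewrite -i_eq_mk => /andP[_ /orP[/eqP/sigma_inj ji | eij]].
    by rewrite ji ltnn in lt_ij.
  by left; apply: near_in_suffix_adj (ltnW lt_ij) eij.
move=> /andP[_ /orP[/eqP j_eq_mk | emk_j]].
  by left; apply: near_in_suffix_adj (ltnW lt_ij) _; rewrite e_sym j_eq_mk.
right; case: max_mk => /[!mem_cnbh] /andP[/imsetP[k' /[!inE] le_kk' mk_eq] _] _.
exists k'; last by rewrite -mk_eq emk_i emk_j.
rewrite ltn_neqAle le_kk' andbT.
by apply: contra_neq ne_kmk => /ord_inj kk'; rewrite mk_eq kk'.
Qed.

Lemma common_nb_in_suffix (k i j : 'I_n) : i <= k -> i < j ->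
  e (sigma k) (sigma i) -> e (sigma k) (sigma j) -> near_in_suffix i j.
Proof.
move=> le_ik lt_ij eki ekj; exists (sigma k).
  by rewrite mem_cnbh mem_S le_ik e_sym eki orbT.
by rewrite mem_cnbh mem_S (ltnW lt_ij) ekj orbT.
Qed.

Lemma common_nb_near_in_suffix (k i j : 'I_n) :
  i < j -> e (sigma k) (sigma i) -> e (sigma k) (sigma j) -> near_in_suffix i j.
Proof.
move=> lt_ij; move: {2}(i - k) (leqnn (i - k)) => d; elim: d k => [|d IH] k le_d.
  by apply: common_nb_in_suffix lt_ij; rewrite -subn_eq0 -leqn0.
move=> eki ekj; have [le_ik | lt_ki] := leqP i k.
  exact: common_nb_in_suffix lt_ij eki ekj.
have [// | [k' lt_kk' /andP[ek'i ek'j]]] := max_nb_common_nb lt_ki lt_ij eki ekj.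
by apply: IH ek'i ek'j; rewrite -ltnS (leq_trans _ le_d) // ltn_sub2l.
Qed.

Lemma sq_adj_near_in_suffix (i j : 'I_n) :
  bijective sigma -> i < j -> sq_adj e (sigma i) (sigma j) -> near_in_suffix i j.
Proof.
move=> [g sigmaK gK] lt_ij /andP[_ /orP[eij | /existsP[w /andP[eiw ewj]]]].
  exact: near_in_suffix_adj (ltnW lt_ij) eij.
by apply: (common_nb_near_in_suffix (k := g w)); rewrite // gK // e_sym.
Qed.

End SquareAdjacency.

Theorem lemma7 (T : finType) (e : rel T) (n : nat)
  (sigma : 'I_n -> T) (m : 'I_n -> T) :
  simple_graph e ->
  is_MNO e sigma ->
  (forall i : 'I_n, i.+1 < n ->
     max_nb e (suffix_set sigma i) (sigma i) (m i) /\ sigma i != m i) ->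
  forall i j : 'I_n, i < j -> m i != sigma j ->
    (sq_adj e (sigma i) (sigma j) <-> e (m i) (sigma j)).
Proof.
move=> [e_sym _] [sigma_bij _] m_max i j lt_ij ne_mi_j.
have sigma_inj := bij_inj sigma_bij.
have [max_mi ne_i_mi] := m_max i (leq_ltn_trans lt_ij (ltn_ord j)).
split.
  case/(sq_adj_near_in_suffix e_sym sigma_inj m_max sigma_bij lt_ij) => w wi jw.
  by apply: max_nb_adj max_mi wi jw _; rewrite eq_sym.
move=> emi_j; rewrite /sq_adj; apply/andP; split.
  by apply: contraTneq lt_ij => /sigma_inj ->; rewrite ltnn.
apply/orP; right; apply/existsP; exists (m i).
by rewrite emi_j andbT (max_nb_neq_adj max_mi).
Qed.
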